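(* Let $(\mathcal{G},v_0)$ be an initialized quantitative reachability game and $(\mathcal{X},x_0)$ its initialized extended game. A play $\rho^0\in\mathrm{Plays}_X(x_0)$ is the outcome of a subgame perfect equilibrium in $(\mathcal{X},x_0)$ if and only if $\rho^0\in\Lambda^*(x_0)$.
   Context: Games: an arena $G=(\Pi,V,(V_i)_{i\in\Pi},E)$ has finite player set $\Pi$, finite vertex set $V$ ($|V|\ge2$, $|\Pi|\le|V|$), a partition $(V_i)$ of $V$, and edges $E$ with every vertex having a successor. Plays are infinite paths, histories finite ones. A quantitative reachability game has target sets $F_i\subseteq V$ and $\mathrm{Cost}_i(\rho)=$ least $k$ with $\rho_k\in F_i$ (or $+\infty$). Strategies map histories ending in $V_i$ to successors; a profile $\sigma$ has outcome $\langle\sigma\rangle_{v_0}$ from $v_0$. $\sigma$ is a Nash equilibrium if no player $i$ can strictly decrease $\mathrm{Cost}_i$ of the outcome by changing only his own strategy; it is a subgame perfect equilibrium (SPE) if for every history $hv$ from the initial vertex, the profile $\sigma_{|h}$ ($\sigma_{i|h}(h')=\sigma_i(hh')$) is a Nash equilibrium in the subgame from $v$ with costs $\rho\mapsto\mathrm{Cost}_i(h\rho)$. Extended game: $\mathcal{X}$ is the reachability game on the arena $X=(\Pi,V^X,(V^X_i),E^X)$ with $V^X=V\times 2^\Pi$, $((v,I),(v',I'))\in E^X$ iff $(v,v')\in E$ and $I'=I\cup\{i\in\Pi: v'\in F_i\}$, $(v,I)\in V^X_i$ iff $v\in V_i$, target sets $F^X_i=\{(v,I): i\in I\}$, and reachability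 costs $\mathrm{Cost}_i$ with respect to these targets; $x_0=(v_0,I_0)$ with $I_0=\{i: v_0\in F_i\}$. For $u\in V^X$, $I(u)$ is its second component; $\mathrm{Plays}_X(u)$ are the plays of $X$ from $u$. Let $\mathcal{I}$ be the set of sets $I$ such that some $(v,I)$ is reachable from $x_0$, $N=|\mathcal{I}|$; the relation $I<I'$ iff $I\ne I'$ and some $(v',I')$ is reachable from some $(v,I)$ is a partial order on $\mathcal{I}$, and a fixed total order $J_1<\dots<J_N$ of $\mathcal{I}$ extends it. $V^{\ge J_n}=\{(v,J_m): v\in V, m\ge n\}$. Labelings: for $\lambda:V^X\to\mathbb{N}\cup\{+\infty\}$, a play $\rho$ of $X$ is $\lambda$-consistent if $\mathrm{Cost}_i(\rho_{\ge n})\le\lambda(\rho_n)$ for all $n$ and all $i$ with $\rho_n\in V^X_i$ (where $\rho_{\ge n}=\rho_n\rho_{n+1}\dots$). The sequence $(\lambda^k)$: $\lambda^0(u)=0$ if $u\in V^X_i$ and $i\in I(u)$, and $+\infty$ otherwise. The update of $\lambda^k$ w.r.t. $V^{\ge J_n}$ is $\lambda^{k+1}$ with $\lambda^{k+1}(u)=\lambda^k(u)$ for $u\notin V^{\ge J_n}$, and for $u\in V^{\ge J_n}\cap V^X_i$: $\lambda^{k+1}(u)=0$ if $i\in I(u)$, otherwise $\lambda^{k+1}(u)=1+\min_{(u,u')\in E^X}\sup\{\mathrm{Cost}_i(\rho):\rho\in\Lambda^k(u')\}$ (with $1+(+\infty)=+\infty$), where $\Lambda^k(u')$ is the set of $\lambda^k$-consistent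 plays from $u'$. The sequence is generated with $n_0=N$, $\lambda^{k+1}=$ update of $\lambda^k$ w.r.t. $V^{\ge J_{n_k}}$, and $n_{k+1}=n_k-1$ if $\lambda^{k+1}=\lambda^k$ and $n_k>1$, $n_{k+1}=n_k$ otherwise. This sequence eventually becomes constant: there is $k^*$ with $\lambda^{k^*+m}=\lambda^{k^*}$ for all $m$; $\lambda^*:=\lambda^{k^*}$ and $\Lambda^*(u)$ is the set of $\lambda^*$-consistent plays from $u$. *)

From Stdlib Require Import ClassicalEpsilon.
From mathcomp Require Import all_boot.
Set Implicit Arguments. Unset Strict Implicit. Unset Printing Implicit Defensive.

(* N ∪ {+oo}: [Some n] is the natural n, [None] is +oo.                *)
Definition ninf := option nat.

Definition ninf_le (a b : ninf) : bool :=
  match a, b with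
  | _, None => true
  | None, Some _ => false
  | Some x, Some y => x <= y
  end.

Definition ninf_lt (a b : ninf) : bool := ninf_le a b && (a != b).

Definition ninf_succ (a : ninf) : ninf := omap S a.

Definition is_lub (S : ninf -> Prop) (s : ninf) : Prop :=
  (forall x, S x -> ninf_le x s) /\
  (forall t, (forall x, S x -> ninf_le x t) -> ninf_le s t).

Definition is_glb (S : ninf -> Prop) (s : ninf) : Prop :=
  (forall x, S x -> ninf_le s x) /\
  (forall t, (forall x, S x -> ninf_le t x) -> ninf_le t s).

Definition ninf_sup (S : ninf -> Prop) : ninf := epsilon (inhabits None) (is_lub S).
Definition ninf_inf (S : ninf -> Prop) : ninf := epsilon (inhabits None) (is_glb S).

Definition rcost (T : Type) (target : T -> bool) (rho : nat -> T) : ninf :=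
  ninf_inf (fun c => exists k, target (rho k) /\ c = Some k).

Definition is_play (T : Type) (e : rel T) (rho : nat -> T) : Prop :=
  forall n, e (rho n) (rho n.+1).

Section Extended.
Variables (Pi V : finType) (owner : V -> Pi) (E : rel V) (F : Pi -> {set V}).

Definition VX := (V * {set Pi})%type.

Definition EX : rel VX := fun u u' =>
  E u.1 u'.1 && (u'.2 == u.2 :|: [set i | u'.1 \in F i]).

Definition ownerX (u : VX) : Pi := owner u.1.

Definition targetX (i : Pi) (u : VX) : bool := i \in u.2.

Definition CostX (i : Pi) (rho : nat -> VX) : ninf := rcost (targetX i) rho.

Definition x0_of (v0 : V) : VX := (v0, [set i | v0 \in F i]).

(* A strategy of player i is a function [s : seq VX -> VX -> VX]:      *)
(* [s h v] is the successor chosen after the history [h ++ [:: v]]     *)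
(* (only relevant when v belongs to player i).                          *)
Definition strategy := seq VX -> VX -> VX.
Definition profile := Pi -> strategy.

Definition valid_strategy (i : Pi) (s : strategy) : Prop :=
  forall h v, ownerX v = i -> EX v (s h v).

Definition valid_profile (sigma : profile) : Prop :=
  forall i, valid_strategy i (sigma i).

(* outcome of sigma_{|h} from v: the play v = rho_0 rho_1 ... with
   rho_{n+1} = sigma_{owner rho_n}(h rho_0 ... rho_n) *)
Definition out_step (sigma : profile) (st : VX * seq VX) : VX * seq VX :=
  (sigma (ownerX st.1) st.2 st.1, rcons st.2 st.1).

Definition outcome (sigma : profile) (h : seq VX) (v : VX) : nat -> VX :=
  fun n => (iter n (out_step sigma) (v, h)).1.

Definition concat_play (h : seq VX) (rho : nat -> VX) : nat -> VX :=
  fun k => if k < size h then nth (rho 0) h k else rho (k - size h).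

Definition deviate (sigma : profile) (i : Pi) (tau : strategy) : profile :=
  fun j => if j == i then tau else sigma j.

(* sigma_{|h} is a Nash equilibrium of the subgame from v,
   with costs rho |-> Cost_i(h rho) *)
Definition NE_sub (sigma : profile) (h : seq VX) (v : VX) : Prop :=
  forall (i : Pi) (tau : strategy), valid_strategy i tau ->
    ~~ ninf_lt (CostX i (concat_play h (outcome (deviate sigma i tau) h v)))
               (CostX i (concat_play h (outcome sigma h v))).

(* h ++ [:: v] is a history (finite path of X) starting at x0 *)
Definition is_history (x0 : VX) (h : seq VX) (v : VX) : Prop :=
  match h with
  | [::] => v = x0
  | a :: t => a = x0 /\ path EX a (rcons t v)
  end.

Definition SPE (x0 : VX) (sigma : profile) : Prop :=
  valid_profile sigma /\ forall h v, is_history x0 h v -> NE_sub sigma h v.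

Definition labeling := VX -> ninf.

Definition consistent (lam : labeling) (rho : nat -> VX) : Prop :=
  forall n, ninf_le (CostX (ownerX (rho n)) (fun k => rho (n + k))) (lam (rho n)).

Definition Lambda (lam : labeling) (u : VX) (rho : nat -> VX) : Prop :=
  is_play EX rho /\ rho 0 = u /\ consistent lam rho.

Definition lam0 : labeling := fun u => if ownerX u \in u.2 then Some 0 else None.

(* J : the fixed total order J_0 < ... < J_{N-1} (0-based) of the reachable sets;
   u \in V^{>= J_n}  iff  u.2 \in drop n J *)
Definition update (J : seq {set Pi}) (lam : labeling) (n : nat) : labeling :=
  fun u =>
    if u.2 \in drop n J then
      let i := ownerX u in
      if i \in u.2 then Some 0
      else ninf_succ (ninf_inf (fun c => exists u', EX u u' /\
             c = ninf_sup (fun d => exists rho, Lambda lam u' rho /\ d = CostX i rho)))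
    else lam u.

(* (lambda^k, n_k), with 0-based index n_k (n_0 = N-1) *)
Fixpoint lam_seq (J : seq {set Pi}) (k : nat) : labeling * nat :=
  match k with
  | 0 => (lam0, (size J).-1)
  | k'.+1 =>
      let (l, n) := lam_seq J k' in
      let l' := update J l n in
      (l', if [forall u, l' u == l u] && (0 < n) then n.-1 else n)
  end.

End Extended.

(* Forward direction: for an SPE sigma, the cost for the player to move of the outcome of sigma
   after any history ending in u is at most lambda^k(u), for every k.  This holds for lambda^0,
   and every update preserves it because a one-shot deviation to a successor u' yields
   1 + Cost(outcome from u'), a cost in the supremum over Lambda^k(u'); so SPE outcomes are
   lambda*-consistent.

   Backward direction: the players follow rho0, and whenever the current reference play is
   left after a vertex u, they switch to a lambda*-consistent play from the new vertex that is
   costliest for the owner of u.  Such a play exists by Koenig's lemma, since Lambda*(v) is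
   nonempty at reachable v, being the outcome of an SPE: a limit of finite-horizon
   backward-induction profiles.  As lambda* is a fixpoint of the update, a deviator at u is
   punished by at least lambda*(u), which already bounds his cost on the reference play; hence
   the cost of the reference plays along any deviation never decreases for the deviator. *)

From Pilot Require Import Defs.
From Stdlib Require Import ClassicalEpsilon FunctionalExtensionality Wf_nat.
From mathcomp Require Import all_boot zify.
Set Implicit Arguments. Unset Strict Implicit. Unset Printing Implicit Defensive.

Section NinfOrder.
Implicit Types (x y z t : ninf) (S : ninf -> Prop).

Lemma ninf_le_refl x : ninf_le x x.
Proof. by case: x => /=. Qed.

Lemma ninf_le_trans y x z : ninf_le x y -> ninf_le y z -> ninf_le x z.
Proof. case: x; case: y; case: z => //= a b c; exact: leq_trans. Qed.

Lemma ninf_le_total x y : ninf_le x y || ninf_le y x.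
Proof. case: x; case: y => //= a b; exact: leq_total. Qed.

Lemma ninf_le_anti x y : ninf_le x y -> ninf_le y x -> x = y.
Proof. case: x; case: y => //= a b ab ba; by rewrite (@anti_leq a b) ?ab ?ba. Qed.

Lemma ninf_le_top x : ninf_le x None.
Proof. by case: x. Qed.

Lemma ninf_ge0 x : ninf_le (Some 0) x.
Proof. by case: x. Qed.

Lemma ninf_leNgt x y : ninf_le x y = ~~ ninf_lt y x.
Proof.
rewrite /ninf_lt negb_and negbK; have [->|neq] := eqVneq y x; first by rewrite ninf_le_refl orbT.
rewrite orbF; apply/idP/idP => [le_xy|]; last by move: (ninf_le_total x y) => /orP [->|->].
by apply/negP => le_yx; rewrite (ninf_le_anti le_xy le_yx) eqxx in neq.
Qed.

Lemma ninf_lt_fin x y : ninf_lt x y -> exists n, x = Some n.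
Proof. by case: x => [n|]; [exists n | case: y]. Qed.

Lemma ninf_le_succ K a b :
  ninf_le (omap (addn K) a) (omap (addn K.+1) b) = ninf_le a (ninf_succ b).
Proof. by case: a; case: b => //= m n; rewrite addSnnS leq_add2l. Qed.

Lemma ninf_least S : (exists x, S x) -> exists2 s, S s & forall x, S x -> ninf_le s x.
Proof.
case=> x Sx; have [someS|noS] := classic (exists n, S (Some n)).
  have [m [[Sm minm] _]] :=
    @dec_inh_nat_subset_has_unique_least_element _ (fun n => classic (S (Some n))) someS.
  by exists (Some m) => // -[n /minm /leP|].
have noSome n : ~ S (Some n) by move=> Sn; apply: noS; exists n.
exists None => [|[n /noSome|] //].
by case: x Sx => // n /noSome.
Qed.

Lemma ninf_inf_glb S : is_glb S (ninf_inf S).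
Proof.
apply: epsilon_spec; have [/ninf_least [s Ss mins]|noS] := classic (exists x, S x).
  by exists s; split=> // t; apply.
exists None; split=> [x Sx|t _]; [by case: noS; exists x | exact: ninf_le_top].
Qed.

Lemma ninf_sup_lub S : is_lub S (ninf_sup S).
Proof.
apply: epsilon_spec.
have [|s ub_s min_s] := @ninf_least (fun t => forall x, S x -> ninf_le x t).
  by exists None => x _; exact: ninf_le_top.
by exists s.
Qed.

Lemma ninf_le_sup S x : S x -> ninf_le x (ninf_sup S).
Proof. exact: (ninf_sup_lub S).1. Qed.

Lemma ninf_sup_le S t : (forall x, S x -> ninf_le x t) -> ninf_le (ninf_sup S) t.
Proof. exact: (ninf_sup_lub S).2. Qed.

Lemma ninf_inf_le S x : S x -> ninf_le (ninf_inf S) x.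
Proof. exact: (ninf_inf_glb S).1. Qed.

Lemma ninf_le_inf S t : (forall x, S x -> ninf_le t x) -> ninf_le t (ninf_inf S).
Proof. exact: (ninf_inf_glb S).2. Qed.

Lemma ninf_inf_mem S : (exists x, S x) -> S (ninf_inf S).
Proof.
move=> /ninf_least [s Ss mins].
by rewrite (@ninf_le_anti (ninf_inf S) s) //; [exact: ninf_inf_le | exact: ninf_le_inf].
Qed.

Lemma ninf_inf_empty S : ~ (exists x, S x) -> ninf_inf S = None.
Proof.
move=> noS; apply: ninf_le_anti; first exact: ninf_le_top.
by apply: ninf_le_inf => x Sx; case: noS; exists x.
Qed.

Lemma ninf_succ_le x y : ninf_le x y -> ninf_le (ninf_succ x) (ninf_succ y).
Proof. by case: x; case: y. Qed.

Lemma ninf_le_succ_inf S x :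
  (forall y, S y -> ninf_le x (ninf_succ y)) -> ninf_le x (ninf_succ (ninf_inf S)).
Proof.
case: x => [[|k]|] lexS; first exact: ninf_ge0.
  have: ninf_le (Some k) (ninf_inf S) by apply: ninf_le_inf => -[y|] /lexS.
  by case: (ninf_inf S).
have: ninf_le None (ninf_inf S) by apply: ninf_le_inf => -[y|] /lexS.
by case: (ninf_inf S).
Qed.

Lemma ninf_max_or_unbounded S : (exists x, S x) ->
  (exists2 s, S s & forall x, S x -> ninf_le x s) \/
  (forall m, exists2 x, S x & ninf_le (Some m) x).
Proof.
move=> neS; have [unb|bnd] := classic (forall m, exists2 x, S x & ninf_le (Some m) x).
  by right.
left; have [M ltM] : exists M, forall x, S x -> ~~ ninf_le (Some M) x.
  apply: NNPP => unb; apply: bnd => m; apply: NNPP => nom; apply: unb.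
  by exists m => x Sx; apply/negP => le_mx; apply: nom; exists x.
elim: M ltM => [|M IH] ltM; first by case: neS => x /ltM; rewrite ninf_ge0.
have [[x Sx le_Mx]|noM] := classic (exists2 x, S x & ninf_le (Some M) x).
  exists x => // -[y|/ltM //] /ltM not_lt; apply: (@ninf_le_trans (Some M) _ _ _ le_Mx).
  by rewrite /= leqNgt.
by apply: IH => x Sx; apply/negP => le_Mx; apply: noM; exists x.
Qed.

End NinfOrder.

Section ReachabilityCost.
Variables (T : Type) (target : T -> bool).
Implicit Types (rho : nat -> T).

Lemma rcost_le rho k : target (rho k) -> ninf_le (rcost target rho) (Some k).
Proof. by move=> tk; apply: ninf_inf_le; exists k. Qed.

Lemma rcost_Some rho k :
  target (rho k) -> (forall j, j < k -> ~~ target (rho j)) -> rcost target rho = Some k.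
Proof.
move=> tk before; apply: ninf_le_anti; first exact: rcost_le.
apply: ninf_le_inf => _ [j [tj ->]] /=; rewrite leqNgt; apply/negP => /before.
by rewrite tj.
Qed.

Lemma rcost_SomeP rho k : rcost target rho = Some k ->
  target (rho k) /\ forall j, j < k -> ~~ target (rho j).
Proof.
move=> cost_k; have [hit|nohit] := classic (exists c, exists j, target (rho j) /\ c = Some j).
  have /= := ninf_inf_mem hit; rewrite -[ninf_inf _]/(rcost target rho) cost_k.
  move=> -[j [tj [e]]]; subst j.
  split=> // j lt_jk; apply/negP => /rcost_le; rewrite cost_k /=.
  by rewrite leqNgt lt_jk.
by move: cost_k; rewrite /rcost ninf_inf_empty.
Qed.

Lemma rcost_None rho : (forall j, ~~ target (rho j)) -> rcost target rho = None.
Proof. by move=> miss; apply: ninf_inf_empty => -[_ [j [tj _]]]; move: (miss j); rewrite tj. Qed.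

Lemma rcost_NoneP rho : rcost target rho = None -> forall j, ~~ target (rho j).
Proof. by move=> cost_oo j; apply/negP => /rcost_le; rewrite cost_oo. Qed.

Lemma rcost_eq_prefix rho1 rho2 k :
  (forall j, j <= k -> rho1 j = rho2 j) -> ninf_le (rcost target rho1) (Some k) ->
  rcost target rho1 = rcost target rho2.
Proof.
move=> agree; case cost1: (rcost target rho1) => [m|] //= le_mk.
have [tm before] := rcost_SomeP cost1; symmetry; apply: rcost_Some; first by rewrite -agree.
by move=> j lt_jm; rewrite -agree; [exact: before | lia].
Qed.

End ReachabilityCost.

Section Compactness.

Definition infinitely_often (D : nat -> Prop) := forall N, exists2 d, N <= d & D d.

Lemma infinitely_often_pigeonhole (T : finType) (D : nat -> Prop) (g : nat -> T) :
  infinitely_often D -> exists x, infinitely_often (fun d => D d /\ g d = x).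
Proof.
move=> ioD; apply: NNPP => none.
have bound x : exists N, forall d, N <= d -> D d -> g d <> x.
  apply: NNPP => unb; apply: none; exists x => N; apply: NNPP => noN; apply: unb.
  by exists N => d le_Nd Dd gdx; apply: noN; exists d.
have [N HN] := choice _ bound.
have [d le_d Dd] := ioD (\max_x N x).
by apply: (HN (g d) d) => //; apply: leq_trans le_d; exact: leq_bigmax.
Qed.

Variables (K : countType) (T : finType) (f : nat -> K -> T).

Definition frequent_value (D : nat -> Prop) (k : K) : T :=
  epsilon (inhabits (f 0 k)) (fun x => infinitely_often (fun d => D d /\ f d k = x)).

(* [diagonal m] keeps the indices where, for every key pickled below [m], [f] takes its
   frequent value on the previous refinement. *)
Fixpoint diagonal (m : nat) : nat -> Prop :=
  match m with
  | 0 => fun _ => True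
  | m'.+1 =>
      if unpickle m' is Some k then fun d => diagonal m' d /\ f d k = frequent_value (diagonal m') k
      else diagonal m'
  end.

Lemma diagonal_io m : infinitely_often (diagonal m).
Proof.
elim: m => [|m IH] /=; first by move=> N; exists N.
case: (unpickle m) => [k|] //.
exact: epsilon_spec (infinitely_often_pigeonhole (f^~ k) IH).
Qed.

Lemma diagonal_mono m j d : diagonal (j + m) d -> diagonal m d.
Proof. by elim: j => [|j IH] //=; case: (unpickle (j + m)) => [k [/IH]|/IH]. Qed.

Definition cluster (k : K) : T := frequent_value (diagonal (pickle k)) k.

Lemma cluster_approx (ks : seq K) N :
  exists2 d, N <= d & {in ks, forall k, f d k = cluster k}.
Proof.
set M := \max_(k <- ks) pickle k.
have [d le_Nd Dd] := diagonal_io M.+1 N; exists d => // k k_ks.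
have lt_kM : pickle k < M.+1 by rewrite ltnS; exact: leq_bigmax_seq.
have := @diagonal_mono (pickle k).+1 (M.+1 - (pickle k).+1) d.
by rewrite subnK //= pickleK => /(_ Dd) [].
Qed.

End Compactness.

Section Plays.
Variables (Pi V : finType) (owner : V -> Pi) (E : rel V) (F : Pi -> {set V}).
Local Notation VX := (VX Pi V).
Local Notation EX := (EX E F).
Local Notation own := (ownerX owner).
Local Notation profile := (profile Pi V).
Local Notation outcome := (outcome owner).
Local Notation valid := (valid_profile owner E F).
Implicit Types (P Q : profile) (h g : seq VX) (u v : VX) (rho : nat -> VX).

Definition outcome_hist P h u n : seq VX := h ++ mkseq (outcome P h u) n.

Lemma outcome_histS P h u n :
  outcome_hist P h u n.+1 = rcons (outcome_hist P h u n) (outcome P h u n).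
Proof. by rewrite /outcome_hist mkseqS rcons_cat. Qed.

Lemma outcome_iter P h u n :
  iter n (out_step owner P) (u, h) = (outcome P h u n, outcome_hist P h u n).
Proof.
elim: n => [|n IH]; first by rewrite /outcome_hist cats0.
by rewrite iterS IH /out_step /= outcome_histS /outcome iterS IH.
Qed.

Lemma outcomeS P h u n :
  outcome P h u n.+1 = P (own (outcome P h u n)) (outcome_hist P h u n) (outcome P h u n).
Proof. by rewrite {1}/outcome iterS outcome_iter. Qed.

Lemma outcome_shift P h u n k :
  outcome P h u (k + n) = outcome P (outcome_hist P h u n) (outcome P h u n) k.
Proof. by rewrite {1}/outcome iterD outcome_iter. Qed.

Lemma outcome_next P h u :
  outcome P h u \o succn = outcome P (rcons h u) (P (own u) h u).
Proof. by apply: functional_extensionality => n; rewrite /= /outcome iterSr. Qed.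

Lemma outcome_is_play P h u : valid P -> is_play EX (outcome P h u).
Proof. by move=> vP n; rewrite outcomeS; apply: vP. Qed.

Lemma outcome_eq_prefix P Q h u n :
  (forall j, j < n -> let v := outcome P h u j in
     P (own v) (outcome_hist P h u j) v = Q (own v) (outcome_hist P h u j) v) ->
  forall j, j <= n -> outcome P h u j = outcome Q h u j.
Proof.
elim: n => [|n IH] agree j; first by rewrite leqn0 => /eqP ->.
have IHn : forall j, j <= n -> outcome P h u j = outcome Q h u j.
  by apply: IH => i lt_in; apply: agree; exact: ltnW.
rewrite leq_eqVlt => /orP [/eqP ->|]; last exact: IHn.
have same_hist : outcome_hist P h u n = outcome_hist Q h u n.
  congr cat; apply/eq_in_map => i; rewrite mem_iota => /andP [_ lt_in].
  exact: IHn (ltnW lt_in).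
by rewrite !outcomeS -same_hist -(IHn n (leqnn n)) agree.
Qed.

Lemma outcome_eq_longer P Q h u :
  (forall g v, size h <= size g -> P (own v) g v = Q (own v) g v) ->
  outcome P h u = outcome Q h u.
Proof.
move=> agree; apply: functional_extensionality => j.
by apply: (@outcome_eq_prefix _ _ _ _ j) => // i _; apply: agree; rewrite size_cat leq_addr.
Qed.

Lemma concat_play_lt h rho k : k < size h -> concat_play h rho k = nth (rho 0) h k.
Proof. by rewrite /concat_play => ->. Qed.

Lemma concat_play_ge h rho k : size h <= k -> concat_play h rho k = rho (k - size h).
Proof. by rewrite /concat_play ltnNge => ->. Qed.

Lemma concat_play_rcons h rho :
  concat_play h rho = concat_play (rcons h (rho 0)) (rho \o succn).
Proof.
apply: functional_extensionality => k; rewrite /concat_play size_rcons.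
case: (ltngtP k (size h)) => [lt_kh|lt_hk|->].
- by rewrite ltnW // nth_rcons lt_kh (set_nth_default (rho 0)).
- by rewrite ltnNge lt_hk /= subnSK.
- by rewrite ltnSn nth_rcons ltnn eqxx subnn.
Qed.

Lemma concat_outcome P h u :
  concat_play h (outcome P h u) = concat_play (rcons h u) (outcome P (rcons h u) (P (own u) h u)).
Proof. by rewrite concat_play_rcons outcome_next. Qed.

Lemma concat_play_eq_prefix h rho1 rho2 n :
  (forall j, j <= n -> rho1 j = rho2 j) ->
  forall j, j <= n -> concat_play h rho1 j = concat_play h rho2 j.
Proof.
move=> agree j le_jn; rewrite /concat_play; case: ifP => _; first by rewrite agree.
by apply: agree; apply: leq_trans le_jn; exact: leq_subr.
Qed.

Section Cost.
Variable target : VX -> bool.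

Lemma rcost_concat_fresh h rho : (forall a, a \in h -> ~~ target a) ->
  rcost target (concat_play h rho) = omap (addn (size h)) (rcost target rho).
Proof.
move=> fresh; have early j : j < size h -> ~~ target (concat_play h rho j).
  by move=> lt_jh; rewrite concat_play_lt // fresh // mem_nth.
case cost: (rcost target rho) => [k|] /=.
  have [tk before] := rcost_SomeP cost; apply: rcost_Some.
    by rewrite concat_play_ge ?leq_addr // addKn.
  move=> j lt_j; case: (ltnP j (size h)) => [/early //|le_hj].
  by rewrite concat_play_ge // before // ltn_subLR.
apply: rcost_None => j; case: (ltnP j (size h)) => [/early //|le_hj].
by rewrite concat_play_ge // (rcost_NoneP cost).
Qed.

Lemma rcost_concat_hit h rho1 rho2 : (exists2 a, a \in h & target a) ->
  rcost target (concat_play h rho1) = rcost target (concat_play h rho2).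
Proof.
case=> a a_h ta; have lt_ah : index a h < size h by rewrite index_mem.
apply: (@rcost_eq_prefix _ _ _ _ (index a h)).
  move=> j le_ja; have lt_jh := leq_ltn_trans le_ja lt_ah.
  by rewrite !concat_play_lt // (set_nth_default (rho2 0)).
by apply: rcost_le; rewrite concat_play_lt // nth_index.
Qed.

Lemma rcost_concat_eq_prefix h rho1 rho2 k : (forall j, j <= k -> rho1 j = rho2 j) ->
  rcost target (concat_play h rho1) = Some k -> rcost target (concat_play h rho2) = Some k.
Proof.
move=> agree cost1; rewrite -cost1; symmetry.
apply: (@rcost_eq_prefix _ _ _ _ k); last by rewrite cost1 /=.
exact: concat_play_eq_prefix agree.
Qed.

End Cost.

Lemma is_history_rcons x0 h a u :
  is_history E F x0 (rcons h a) u <-> is_history E F x0 h a /\ EX a u.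
Proof.
case: h => [|b t] /=; first by split=> [[-> /andP [-> _]]|[-> ->]].
by rewrite rcons_path last_rcons; split=> [[-> /andP [-> ->]]|[[-> ->] ->]].
Qed.

Lemma EX_sub u u' : EX u u' -> u.2 \subset u'.2.
Proof. by move=> /andP [_ /eqP ->]; exact: subsetUl. Qed.

Lemma is_history_sub x0 h u a : is_history E F x0 h u -> a \in h -> a.2 \subset u.2.
Proof.
elim/last_ind: h u => [|h b IH] u //= /is_history_rcons [hist_b /EX_sub sub_bu].
rewrite mem_rcons in_cons => /orP [/eqP -> //|a_h].
exact: subset_trans (IH _ hist_b a_h) sub_bu.
Qed.

Lemma is_history_connect x0 h u : is_history E F x0 h u -> connect EX x0 u.
Proof.
elim/last_ind: h u => [|h b IH] u /=; first by move=> ->; exact: connect0.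
by move=> /is_history_rcons [/IH reach_b /connect1]; exact: connect_trans.
Qed.

Lemma connect_is_history x0 u : connect EX x0 u -> exists h, is_history E F x0 h u.
Proof.
move=> /connectP [p]; elim/last_ind: p u => [|p b IH] u; first by move=> _ ->; exists [::].
rewrite rcons_path last_rcons => /andP [path_p e] ->; have [h hist_h] := IH _ path_p erefl.
by exists (rcons h (last x0 p)); apply/is_history_rcons.
Qed.

Lemma outcome_hist_is_history x0 P h u n : valid P -> is_history E F x0 h u ->
  is_history E F x0 (outcome_hist P h u n) (outcome P h u n).
Proof.
move=> vP hist_u; elim: n => [|n IH]; first by rewrite /outcome_hist cats0.
by rewrite outcome_histS; apply/is_history_rcons; split=> //; exact: outcome_is_play.
Qed.

End Plays.

Section SPEOutcomes.
Variables (Pi V : finType) (owner : V -> Pi) (E : rel V) (F : Pi -> {set V}).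
Local Notation VX := (VX Pi V).
Local Notation own := (ownerX owner).
Local Notation outcome := (outcome owner).
Local Notation outcome_hist := (outcome_hist owner).
Local Notation Lambda := (Lambda owner E F).
Variables (x0 : VX) (sigma : profile Pi V).
Hypothesis sigma_SPE : SPE owner E F x0 sigma.

Definition outcomes_below (lam : labeling Pi V) :=
  forall h u, is_history E F x0 h u -> ninf_le (CostX (own u) (outcome sigma h u)) (lam u).

Lemma outcomes_below_Lambda lam h u : outcomes_below lam -> is_history E F x0 h u ->
  Lambda lam u (outcome sigma h u).
Proof.
move=> below hist_u; split; first exact: outcome_is_play sigma_SPE.1.
split=> // n; have -> : (fun k => outcome sigma h u (n + k)) =
                         outcome sigma (outcome_hist sigma h u n) (outcome sigma h u n).
  by apply: functional_extensionality => k; rewrite addnC outcome_shift.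
by apply: below; exact: outcome_hist_is_history sigma_SPE.1 hist_u.
Qed.

Lemma outcomes_below_lam0 : outcomes_below (lam0 owner).
Proof.
move=> h u _; rewrite /lam0; case: ifP => [owner_done|_]; last exact: ninf_le_top.
exact: rcost_le.
Qed.

(* The one-shot deviation of [own u] to [u'] after [h] costs him [1 + Cost(outcome from u')],
   so the Nash condition at [h u] bounds his cost by every term of the infimum. *)
Lemma outcomes_below_update J lam n :
  outcomes_below lam -> outcomes_below (update owner E F J lam n).
Proof.
move=> below h u hist_u; rewrite /update; case: ifP => _; last exact: below.
set i := own u; case: ifP => [i_done|i_fresh]; first exact: rcost_le.
apply: ninf_le_succ_inf => _ [u' [e_uu' ->]].
have hist_u' : is_history E F x0 (rcons h u) u' by apply/is_history_rcons.
set rho' := outcome sigma (rcons h u) u'.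
apply: (@ninf_le_trans (ninf_succ (CostX i rho'))); last first.
  apply: ninf_succ_le; apply: ninf_le_sup; exists rho'; split=> //.
  exact: outcomes_below_Lambda.
pose tau : strategy Pi V := fun g v => if (g == h) && (v == u) then u' else sigma i g v.
have valid_tau : valid_strategy owner E F i tau.
  move=> g v own_v; rewrite /tau; case: ifP => [/andP [_ /eqP -> //]|_].
  by rewrite -own_v; exact: sigma_SPE.1.
have dev_outcome : outcome (deviate sigma i tau) (rcons h u) u' = rho'.
  apply: outcome_eq_longer => g v; rewrite size_rcons /deviate /tau.
  case: eqP => [->|//]; case: (g =P h) => [->|//].
  by rewrite ltnn.
have fresh_h a : a \in h -> ~~ targetX i a.
  by move=> a_h; apply/negP => /(subsetP (is_history_sub hist_u a_h)); rewrite i_fresh.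
have fresh_hu a : a \in rcons h u -> ~~ targetX i a.
  by rewrite mem_rcons in_cons => /orP [/eqP ->|/fresh_h //]; rewrite /targetX i_fresh.
have := sigma_SPE.2 h u hist_u i tau valid_tau; rewrite -ninf_leNgt.
have dev_move : deviate sigma i tau (own u) h u = u' by rewrite /deviate eqxx /tau !eqxx.
rewrite /CostX (concat_outcome owner (deviate _ _ _)) dev_move dev_outcome.
by rewrite !rcost_concat_fresh // size_rcons ninf_le_succ.
Qed.

Lemma outcomes_below_lam_seq J k : outcomes_below (lam_seq owner E F J k).1.
Proof.
elim: k => [|k IH] /=; first exact: outcomes_below_lam0.
by case: (lam_seq owner E F J k) IH => lam n /= IH; exact: outcomes_below_update.
Qed.

End SPEOutcomes.

Lemma SPE_outcome_Lambda (Pi V : finType) owner E F (J : seq {set Pi}) k x0 sigma h u :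
  SPE owner E F x0 sigma -> is_history E F x0 h u ->
  Lambda owner E F (@lam_seq Pi V owner E F J k).1 u (outcome owner sigma h u).
Proof. by move=> sigma_SPE; apply: outcomes_below_Lambda (outcomes_below_lam_seq _ _ _). Qed.

Section SPEExistence.
Variables (Pi V : finType) (owner : V -> Pi) (E : rel V) (F : Pi -> {set V}).
Hypothesis E_total : forall v : V, exists v' : V, E v v'.
Local Notation VX := (VX Pi V).
Local Notation EX := (EX E F).
Local Notation own := (ownerX owner).
Local Notation profile := (profile Pi V).
Local Notation strategy := (strategy Pi V).
Local Notation outcome := (outcome owner).
Local Notation outcome_hist := (outcome_hist owner).
Implicit Types (g h : seq VX) (u : VX) (rho : nat -> VX).

Definition some_succ u : VX := epsilon (inhabits u) (EX u).

Lemma some_succP u : EX u (some_succ u).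
Proof.
have [v' e] := E_total u.1; apply: (epsilon_spec (inhabits u) (EX u)).
by exists (v', u.2 :|: [set i | v' \in F i]); rewrite /Defs.EX /= e eqxx.
Qed.

Definition trunc_cost (d : nat) (i : Pi) rho : nat :=
  if CostX i rho is Some k then minn k d else d.

Lemma trunc_cost_le d i rho : trunc_cost d i rho <= d.
Proof. by rewrite /trunc_cost; case: CostX => [k|] //; exact: geq_minr. Qed.

Lemma trunc_cost_Some d i rho k : CostX i rho = Some k -> k < d -> trunc_cost d i rho = k.
Proof. by rewrite /trunc_cost => -> /ltnW /minn_idPl. Qed.

Lemma trunc_cost_lt d i rho : trunc_cost d i rho < d -> CostX i rho = Some (trunc_cost d i rho).
Proof.
rewrite /trunc_cost; case: CostX => [k|]; last by rewrite ltnn.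
by case: (leqP d k); rewrite ?ltnn.
Qed.

Lemma trunc_cost_eq_prefix d i rho1 rho2 : (forall j, j < d -> rho1 j = rho2 j) ->
  trunc_cost d i rho1 = trunc_cost d i rho2.
Proof.
suff le_tc r1 r2 : (forall j, j < d -> r1 j = r2 j) -> trunc_cost d i r1 <= trunc_cost d i r2.
  by move=> agree; apply/anti_leq; rewrite !le_tc // => j /agree ->.
move=> agree; have [lt_d|] := ltnP (trunc_cost d i r2) d; last first.
  by apply: leq_trans; exact: trunc_cost_le.
set k := trunc_cost d i r2 in lt_d *.
have cost2 : rcost (targetX i) r2 = Some k := trunc_cost_lt lt_d.
have cost1 : CostX i r1 = Some k.
  rewrite /CostX -cost2; symmetry; apply: (@rcost_eq_prefix _ _ _ _ k).
    by move=> j le_jk; rewrite agree //; exact: leq_ltn_trans lt_d.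
  by rewrite cost2 /=.
by rewrite (trunc_cost_Some cost1 lt_d).
Qed.

(* [bi_strategy d n] plays, at histories of length [d - n], a successor minimising the
   [d]-truncated cost of the mover, against [bi_strategy d n'] (n' < n) on longer ones. *)
Fixpoint bi_strategy (d n : nat) : strategy :=
  if n is n'.+1 then fun g u =>
    if size g + n == d then
      [arg min_(s < some_succ u | EX u s)
        trunc_cost d (own u)
          (concat_play (rcons g u) (outcome (fun=> bi_strategy d n') (rcons g u) s))]
    else bi_strategy d n' g u
  else fun _ u => some_succ u.

Lemma bi_strategyP d n g u : EX u (bi_strategy d n g u).
Proof.
elim: n g u => [|n IH] g u /=; first exact: some_succP.
by case: ifP => _ //; case: arg_minnP => //; exact: some_succP.
Qed.

Lemma bi_strategy_stable d n m g u :
  d <= size g + n -> bi_strategy d (m + n) g u = bi_strategy d n g u.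
Proof. by move=> le_d; elim: m => [|m IH] //=; rewrite ifN ?IH //; lia. Qed.

Definition horizon_profile (d : nat) : profile := fun=> bi_strategy d d.

Lemma horizon_profile_bi d r g u : r <= d -> d <= size g + r ->
  horizon_profile d (own u) g u = bi_strategy d r g u.
Proof.
move=> le_rd le_d; rewrite /horizon_profile /=.
have -> : bi_strategy d d = bi_strategy d (d - r + r) by rewrite subnK.
exact: bi_strategy_stable.
Qed.

Lemma horizon_profile_move d r g u : size g + r.+1 = d ->
  horizon_profile d (own u) g u =
  [arg min_(s < some_succ u | EX u s)
    trunc_cost d (own u) (concat_play (rcons g u) (outcome (horizon_profile d) (rcons g u) s))].
Proof.
move=> len_g; have same_outcomes :
    outcome (fun=> bi_strategy d r) (rcons g u) = outcome (horizon_profile d) (rcons g u).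
  apply: functional_extensionality => s; apply: outcome_eq_longer => g' v.
  by rewrite size_rcons => lt_g'; rewrite (@horizon_profile_bi d r) //; lia.
by rewrite (@horizon_profile_bi d r.+1) /= ?len_g ?eqxx ?same_outcomes //; lia.
Qed.

Lemma horizon_profile_opt d g u i tau : valid_strategy owner E F i tau ->
  trunc_cost d i (concat_play g (outcome (horizon_profile d) g u)) <=
  trunc_cost d i (concat_play g (outcome (deviate (horizon_profile d) i tau) g u)).
Proof.
move=> valid_tau; move: {2}(d - size g) (leqnn (d - size g)) => r.
elim: r g u => [|r IH] g u le_r.
  apply/eq_leq/trunc_cost_eq_prefix => j lt_jd.
  by rewrite !concat_play_lt ?(set_nth_default (u : VX)) //; lia.
have [/IH //|lt_r] := leqP (d - size g) r.
have len_g : size g + r.+1 = d by lia.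
have le_r' : d - size (rcons g u) <= r by rewrite size_rcons; lia.
set H := horizon_profile d; set D := deviate H i tau.
rewrite (concat_outcome owner H) (concat_outcome owner D).
have [own_i|own_ni] := eqVneq (own u) i; last first.
  have -> : D (own u) g u = H (own u) g u by rewrite /D /deviate (negbTE own_ni).
  exact: IH.
have -> : D (own u) g u = tau g u by rewrite /D /deviate own_i eqxx.
apply: leq_trans (IH _ _ le_r'); rewrite -own_i /H (horizon_profile_move _ len_g).
by case: arg_minnP => [|s _ /(_ (tau g u)) -> //]; [exact: some_succP | apply: valid_tau].
Qed.

Definition horizon_move (d : nat) (k : seq VX * VX) : VX := bi_strategy d d k.1 k.2.

Definition limit_profile : profile := fun _ g u => cluster horizon_move (g, u).

Lemma limit_profile_valid : valid_profile owner E F limit_profile.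
Proof.
move=> i g u _; have [d _ agree] := cluster_approx horizon_move [:: (g, u)] 0.
by rewrite /limit_profile -(agree (g, u)) ?mem_head //; exact: bi_strategyP.
Qed.

Lemma limit_profile_approx h u i tau n : exists2 d, n <= d &
  (forall j, j <= n -> outcome limit_profile h u j = outcome (horizon_profile d) h u j) /\
  (forall j, j <= n -> outcome (deviate limit_profile i tau) h u j =
                       outcome (deviate (horizon_profile d) i tau) h u j).
Proof.
set L := limit_profile; set D := deviate L i tau.
pose keys P := [seq (outcome_hist P h u j, outcome P h u j) | j <- iota 0 n].
have [d le_nd agree] := cluster_approx horizon_move (keys L ++ keys D) n.
have agree_at P j : {subset keys P <= keys L ++ keys D} -> j < n ->
    L (own (outcome P h u j)) (outcome_hist P h u j) (outcome P h u j) =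
    horizon_profile d (own (outcome P h u j)) (outcome_hist P h u j) (outcome P h u j).
  move=> sub lt_jn; rewrite /L /limit_profile -(agree (_, _)) // sub //.
  by apply/mapP; exists j; rewrite ?mem_iota.
exists d => //; split; apply: outcome_eq_prefix => j lt_jn /=.
  by apply: agree_at => // k k_L; rewrite mem_cat k_L.
rewrite /D /deviate; case: eqP => // _.
by apply: agree_at => // k k_D; rewrite mem_cat k_D orbT.
Qed.

Lemma limit_profile_SPE x0 : SPE owner E F x0 limit_profile.
Proof.
split=> [|h u _ i tau valid_tau]; first exact: limit_profile_valid.
set L := limit_profile; apply/negP => lt_dev; have [c cost_dev] := ninf_lt_fin lt_dev.
have [d lt_cd [agreeL agreeD]] := limit_profile_approx h u i tau c.+1.
set H := horizon_profile d.
have cost_devH : CostX i (concat_play h (outcome (deviate H i tau) h u)) = Some c.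
  by apply: rcost_concat_eq_prefix cost_dev => j le_jc; apply: agreeD; exact: leqW.
have := horizon_profile_opt d h u valid_tau; rewrite -/H (trunc_cost_Some cost_devH lt_cd).
set k := trunc_cost _ _ _ => le_kc; have lt_kd := leq_ltn_trans le_kc lt_cd.
have cost_L : CostX i (concat_play h (outcome L h u)) = Some k.
  by apply: rcost_concat_eq_prefix (trunc_cost_lt lt_kd) => j le_jk; rewrite agreeL //; lia.
by move: lt_dev; rewrite cost_dev cost_L; apply/negP; rewrite -ninf_leNgt.
Qed.

End SPEExistence.

Section StableLabeling.
Variables (Pi V : finType) (owner : V -> Pi) (E : rel V) (F : Pi -> {set V}).
Variables (J : seq {set Pi}) (kstar : nat).
Local Notation lam k := (lam_seq owner E F J k).
Hypothesis lam_stable : forall m u, (lam (kstar + m)).1 u = (lam kstar).1 u.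

Lemma lam_seqS k : (lam k.+1).1 = update owner E F J (lam k).1 (lam k).2.
Proof. by rewrite /=; case: (lam k). Qed.

Lemma lam_seq_stable m : (lam (kstar + m)).1 = (lam kstar).1.
Proof. exact/functional_extensionality/lam_stable. Qed.

Lemma lam_seq_level m : (lam (kstar + m)).2 = (lam kstar).2 - m.
Proof.
elim: m => [|m IH]; first by rewrite addn0 subn0.
have := lam_seq_stable m.+1; have := lam_seq_stable m; rewrite addnS /=.
case: (lam (kstar + m)) IH => l n /= -> -> upd; rewrite upd.
have -> : [forall u, (lam kstar).1 u == (lam kstar).1 u] by apply/forallP.
by rewrite subnS; case: (_ - m).
Qed.

Lemma lam_star_update0 : update owner E F J (lam kstar).1 0 = (lam kstar).1.
Proof.
have := lam_seq_stable (lam kstar).2.+1.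
by rewrite addnS lam_seqS lam_seq_stable lam_seq_level subnn.
Qed.

Lemma lam_star_fixpoint u : u.2 \in J -> ownerX owner u \notin u.2 ->
  (lam kstar).1 u = ninf_succ (ninf_inf (fun c => exists u', EX E F u u' /\ c =
    ninf_sup (fun d => exists rho, Lambda owner E F (lam kstar).1 u' rho /\
                                   d = CostX (ownerX owner u) rho))).
Proof. by move=> u_J fresh_u; rewrite -{1}lam_star_update0 /update drop0 u_J (negbTE fresh_u). Qed.

End StableLabeling.

Section CostliestPlay.
Variables (Pi V : finType) (owner : V -> Pi) (E : rel V) (F : Pi -> {set V}).
Local Notation VX := (VX Pi V).
Local Notation Lambda := (Lambda owner E F).
Variables (lam : labeling Pi V) (w : VX) (i : Pi).

(* König's lemma, through the compactness of plays: a cluster point of consistent plays of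
   unbounded cost is consistent and never reaches the target. *)
Lemma Lambda_unbounded_cost :
  (forall m, exists pi, Lambda lam w pi /\ ninf_le (Some m) (CostX i pi)) ->
  exists pi, Lambda lam w pi /\ CostX i pi = None.
Proof.
move=> unb; have [W HW] := choice _ unb; set rho := cluster W.
have approx n N : exists2 d, N <= d & forall j, j <= n -> W d j = rho j.
  have [d le_Nd agree] := cluster_approx W (iota 0 n.+1) N.
  by exists d => // j le_jn; apply: agree; rewrite mem_iota.
exists rho; split; [split; [|split]|].
- move=> n; have [d _ agree] := approx n.+1 0.
  by rewrite -!agree //; case: (HW d) => -[play_W _] _; exact: play_W.
- by have [d _ agree] := approx 0 0; rewrite -agree //; case: (HW d) => -[_ []].
- move=> n; case lam_n: (lam (rho n)) => [c|]; last exact: ninf_le_top.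
  have [d _ agree] := approx (n + c) 0; have [[_ [_ consistent_W]] _] := HW d.
  have := consistent_W n; rewrite agree ?leq_addr // lam_n => cost_W.
  rewrite /CostX -(@rcost_eq_prefix _ _ (fun k => W d (n + k)) _ c) // => j le_jc.
  by rewrite agree // leq_add2l.
- apply: rcost_None => j; have [d lt_jd agree] := approx j j.+1.
  rewrite -agree //; apply/negP => /rcost_le target_j.
  by have := ninf_le_trans (HW d).2 target_j; rewrite /= leqNgt lt_jd.
Qed.

Definition costliest (pi : nat -> VX) : Prop :=
  Lambda lam w pi /\ forall pi', Lambda lam w pi' -> ninf_le (CostX i pi') (CostX i pi).

Lemma Lambda_costliest : (exists pi, Lambda lam w pi) -> exists pi, costliest pi.
Proof.
move=> [pi0 L0].
have [[_ [pi [L ->]] max_pi]|unb] :=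
  @ninf_max_or_unbounded (fun c => exists pi, Lambda lam w pi /\ c = CostX i pi)
    (ex_intro _ _ (ex_intro _ pi0 (conj L0 erefl))).
  by exists pi; split=> // pi' L'; apply: max_pi; exists pi'.
have [|pi [L cost_oo]] := Lambda_unbounded_cost.
  by move=> m; have [_ [pi [L ->]] le_m] := unb m; exists pi.
by exists pi; split=> // pi' _; rewrite cost_oo; exact: ninf_le_top.
Qed.

End CostliestPlay.

Section PunishmentProfile.
Variables (Pi V : finType) (owner : V -> Pi) (E : rel V) (F : Pi -> {set V}).
Hypothesis E_total : forall v : V, exists v' : V, E v v'.
Local Notation VX := (VX Pi V).
Local Notation EX := (EX E F).
Local Notation own := (ownerX owner).
Local Notation profile := (profile Pi V).
Local Notation strategy := (strategy Pi V).
Local Notation outcome := (outcome owner).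
Local Notation outcome_hist := (outcome_hist owner).
Local Notation valid := (valid_profile owner E F).
Local Notation Lambda := (Lambda owner E F).
Implicit Types (h g : seq VX) (u v w : VX).

Variables (lam : labeling Pi V) (x0 : VX) (rho0 : nat -> VX).
Local Notation sup_cost i w :=
  (ninf_sup (fun d => exists rho, Lambda lam w rho /\ d = CostX i rho)).
Hypothesis lam_fixpoint : forall u, connect EX x0 u -> own u \notin u.2 ->
  lam u = ninf_succ (ninf_inf (fun c => exists u', EX u u' /\ c = sup_cost (own u) u')).
Hypothesis Lambda_nonempty : forall u, connect EX x0 u -> exists rho, Lambda lam u rho.
Hypothesis rho0_Lambda : Lambda lam x0 rho0.

Definition punishing (i : Pi) w : nat -> VX :=
  epsilon (inhabits (fun=> w)) (costliest owner E F lam w i).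

Lemma punishingP i w : connect EX x0 w ->
  Lambda lam w (punishing i w) /\ ninf_le (sup_cost i w) (CostX i (punishing i w)).
Proof.
move=> reach_w; have [L max_pi] : costliest owner E F lam w i (punishing i w).
  exact: epsilon_spec (Lambda_costliest i (Lambda_nonempty reach_w)).
by split=> //; apply: ninf_sup_le => _ [rho [L_rho ->]]; exact: max_pi.
Qed.

Lemma lam_le_punishing i v w : connect EX x0 v -> own v = i -> i \notin v.2 -> EX v w ->
  ninf_le (lam v) (ninf_succ (CostX i (punishing i w))).
Proof.
move=> reach_v own_v fresh_v e_vw; have reach_w : connect EX x0 w.
  by apply: connect_trans reach_v (connect1 e_vw).
rewrite -own_v in fresh_v *; rewrite (lam_fixpoint reach_v fresh_v); apply: ninf_succ_le.
apply: ninf_le_trans (ninf_inf_le (ex_intro _ w (conj e_vw erefl))) _.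
exact: (punishingP _ reach_w).2.
Qed.

(* A state [(R, t, u)] records the reference play [R], currently followed at position [t],
   and the last vertex [u].  When the play leaves [R] after [u], the new reference play is
   a costliest [lam]-consistent play for the player [own u] who left it. *)
Definition ref_step (s : (nat -> VX) * nat * VX) w : (nat -> VX) * nat * VX :=
  let: (R, t, u) := s in if R t.+1 == w then (R, t.+1, w) else (punishing (own u) w, 0, w).

Definition ref_state h u : (nat -> VX) * nat * VX :=
  if h is a :: t then foldl ref_step (rho0, 0, a) (rcons t u) else (rho0, 0, u).

Lemma ref_state_rcons h a u : ref_state (rcons h a) u = ref_step (ref_state h a) u.
Proof. by case: h => [|b t] //=; rewrite -cats1 foldl_cat. Qed.

Lemma ref_state_last h u : (ref_state h u).2 = u.
Proof.
case/lastP: h => [|h a] //; rewrite ref_state_rcons /ref_step.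
by case: (ref_state h a) => [[R t] v]; case: ifP.
Qed.

Definition follow_ref : profile := fun _ g u =>
  let: (R, t, _) := ref_state g u in
  if (R t == u) && EX u (R t.+1) then R t.+1 else some_succ E F u.

Lemma follow_ref_valid : valid follow_ref.
Proof.
move=> i g u _; rewrite /follow_ref; case: (ref_state g u) => [[R t] v].
by case: ifP => [/andP [_ //]|_]; exact: some_succP.
Qed.

Definition ref_invariant h u : Prop :=
  let: (R, t, _) := ref_state h u in R t = u /\ is_play EX R /\ consistent owner lam R.

Lemma ref_invariant_history h u : is_history E F x0 h u -> ref_invariant h u.
Proof.
elim/last_ind: h u => [|h a IH] u; first by move=> /= ->; case: rho0_Lambda => ? [].
move=> hist_u; have /is_history_rcons [hist_a _] := hist_u.
rewrite /ref_invariant ref_state_rcons; move: (IH _ hist_a) (ref_state_last h a).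
rewrite /ref_invariant; case: (ref_state h a) => [[R t] v] [Rt [play_R consistent_R]] /= ->.
case: ifP => [/eqP -> //|_].
by have [[play_P [start_P consistent_P]] _] := punishingP (own a) (is_history_connect hist_u).
Qed.

Lemma follow_ref_outcome h u R t : ref_state h u = (R, t, u) -> R t = u -> is_play EX R ->
  forall n, outcome follow_ref h u n = R (t + n) /\
    ref_state (outcome_hist follow_ref h u n) (outcome follow_ref h u n) = (R, t + n, R (t + n)).
Proof.
move=> state_u Rt play_R; elim=> [|n [out_n state_n]].
  by rewrite addn0 /outcome_hist cats0 /= state_u Rt.
have out_Sn : outcome follow_ref h u n.+1 = R (t + n.+1).
  by rewrite outcomeS /follow_ref state_n out_n eqxx addnS play_R.
by rewrite outcome_histS ref_state_rcons state_n /ref_step out_Sn addnS eqxx.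
Qed.

Section Deviation.
Variables (h : seq VX) (u : VX) (i : Pi) (tau : strategy).
Hypotheses (hist_u : is_history E F x0 h u) (valid_tau : valid_strategy owner E F i tau).
Local Notation D := (deviate follow_ref i tau).
Local Notation pi := (outcome D h u).
Local Notation hist n := (outcome_hist D h u n).

Lemma deviate_valid : valid D.
Proof.
move=> j g v own_v; rewrite /deviate; case: eqP => [j_i|_]; last exact: follow_ref_valid.
by apply: valid_tau; rewrite own_v.
Qed.

Lemma deviation_history n : is_history E F x0 (hist n) (pi n).
Proof. exact: outcome_hist_is_history deviate_valid hist_u. Qed.

(* The cost for [i] of the reference play after [hist n]: it starts at the cost of the
   equilibrium outcome and ends below the cost of the deviation. *)
Definition ref_cost n : ninf :=
  let: (R, t, _) := ref_state (hist n) (pi n) in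
  CostX i (concat_play (hist n) (fun k => R (t + k))).

Lemma ref_cost0 : ref_cost 0 = CostX i (concat_play h (outcome follow_ref h u)).
Proof.
have := ref_invariant_history hist_u; have := ref_state_last h u.
rewrite /ref_cost /ref_invariant /= /outcome_hist cats0.
case state_u: (ref_state h u) => [[R t] v] /= v_u; subst v.
case=> Rt [play_R _]; congr (CostX i (concat_play h _)).
by apply: functional_extensionality => k; rewrite (follow_ref_outcome state_u Rt play_R k).1.
Qed.

Lemma ref_cost_target n : targetX i (pi n) -> ninf_le (ref_cost n) (Some (size (hist n))).
Proof.
move=> target_n; have := ref_invariant_history (deviation_history n).
rewrite /ref_cost /ref_invariant.
case: (ref_state (hist n) (pi n)) => [[R t] v] [Rt _].
by apply: rcost_le; rewrite concat_play_ge // subnn addn0 Rt.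
Qed.

Lemma deviation_leaves_ref n R t v : ref_state (hist n) (pi n) = (R, t, v) ->
  R t = pi n -> is_play EX R -> R t.+1 != pi n.+1 -> own (pi n) = i.
Proof.
move=> state_n Rt play_R; apply: contraNeq => own_ni; apply/eqP.
by rewrite outcomeS /deviate (negbTE own_ni) /follow_ref state_n Rt eqxx -Rt play_R.
Qed.

(* Leaving the reference play at [pi n] only helps [i] if it beats [lam (pi n)], which
   the punishing play starting at [pi n.+1] forbids. *)
Lemma ref_cost_nondecreasing n : i \notin (pi n).2 -> ninf_le (ref_cost n) (ref_cost n.+1).
Proof.
move=> fresh_n; have := ref_invariant_history (deviation_history n).
rewrite /ref_cost /ref_invariant outcome_histS ref_state_rcons /ref_step.
have := ref_state_last (hist n) (pi n).
case state_n: (ref_state (hist n) (pi n)) => [[R t] v] /= -> [Rt [play_R consistent_R]].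
have [follows|leaves] := eqVneq (R t.+1) (pi n.+1).
  have shift : (fun k => R (t + k)) \o succn = (fun k => R (t.+1 + k)).
    by apply: functional_extensionality => k /=; rewrite addSnnS.
  by rewrite [concat_play (hist n) _]concat_play_rcons /= addn0 Rt shift; exact: ninf_le_refl.
have own_n := deviation_leaves_ref state_n Rt play_R leaves.
have fresh_hist a : a \in rcons (hist n) (pi n) -> ~~ targetX i a.
  rewrite mem_rcons in_cons => /orP [/eqP -> //|a_h].
  by apply: contra fresh_n; apply: (subsetP (is_history_sub (deviation_history n) a_h)).
have := consistent_R t; rewrite Rt {1}own_n => consistent_n.
rewrite /CostX rcost_concat_fresh => [|a a_h]; last first.
  by apply: fresh_hist; rewrite mem_rcons in_cons a_h orbT.
have e_n : EX (pi n) (pi n.+1) by rewrite outcomeS; apply: deviate_valid.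
have := lam_le_punishing (is_history_connect (deviation_history n)) own_n fresh_n e_n.
rewrite rcost_concat_fresh // size_rcons ninf_le_succ {1}own_n.
exact: ninf_le_trans consistent_n.
Qed.

End Deviation.

Lemma follow_ref_SPE : SPE owner E F x0 follow_ref.
Proof.
split=> [|h u hist_u i tau valid_tau]; first exact: follow_ref_valid.
set D := deviate follow_ref i tau; set pi := outcome D h u; apply/negP => lt_dev.
have [i_u|fresh_u] := boolP (i \in u.2).
  have same_cost : CostX i (concat_play h pi) = CostX i (concat_play h (outcome follow_ref h u)).
    rewrite /CostX (concat_outcome owner D) (concat_outcome owner follow_ref).
    by apply: rcost_concat_hit; exists u; rewrite ?mem_rcons ?mem_head.
  by move: lt_dev; rewrite same_cost /ninf_lt eqxx andbF.
have [c cost_dev] := ninf_lt_fin lt_dev.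
have fresh_h a : a \in h -> ~~ targetX i a.
  by move=> a_h; apply: contra fresh_u; apply: (subsetP (is_history_sub hist_u a_h)).
have [m cost_pi c_def] : exists2 m, rcost (targetX i) pi = Some m & c = size h + m.
  by move: cost_dev; rewrite /CostX rcost_concat_fresh //; case: rcost => [m|] //= [<-]; exists m.
have [target_m before_m] := rcost_SomeP cost_pi.
have chain n : n <= m -> ninf_le (ref_cost h u i tau 0) (ref_cost h u i tau n).
  elim: n => [|n IH] lt_nm; first exact: ninf_le_refl.
  have step := ref_cost_nondecreasing hist_u valid_tau (before_m _ lt_nm).
  exact: ninf_le_trans (IH (ltnW lt_nm)) step.
have := ninf_le_trans (chain m (leqnn m)) (ref_cost_target hist_u valid_tau target_m).
by rewrite ref_cost0 // size_cat size_mkseq -c_def -cost_dev ninf_leNgt lt_dev.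
Qed.

Lemma follow_ref_outcome0 : rho0 0 = x0 -> outcome follow_ref [::] x0 = rho0.
Proof.
move=> rho0_x0; apply: functional_extensionality => n.
by have [] := follow_ref_outcome (h := [::]) (R := rho0) (t := 0) erefl rho0_x0 rho0_Lambda.1 n.
Qed.

End PunishmentProfile.

Theorem theorem2p10
  (Pi V : finType) (owner : V -> Pi) (E : rel V) (F : Pi -> {set V}) (v0 : V)
  (hV : 2 <= #|V|) (hPi : #|Pi| <= #|V|)
  (hE : forall v : V, exists v' : V, E v v')
  (J : seq {set Pi})
  (hJuniq : uniq J)
  (hJreach : forall I : {set Pi},
      I \in J <-> exists v : V, connect (EX E F) (x0_of F v0) (v, I))
  (hJorder : forall m n : nat, m < size J -> n < size J ->
      nth set0 J m != nth set0 J n ->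
      (exists v v' : V, connect (EX E F) (v, nth set0 J m) (v', nth set0 J n)) ->
      m < n)
  (kstar : nat)
  (hkstar : forall (m : nat) (u : VX Pi V),
      (lam_seq owner E F J (kstar + m)).1 u = (lam_seq owner E F J kstar).1 u)
  (rho0 : nat -> VX Pi V)
  (hrho0 : is_play (EX E F) rho0 /\ rho0 0 = x0_of F v0) :
  (exists sigma : profile Pi V,
      SPE owner E F (x0_of F v0) sigma /\
      forall n, outcome owner sigma [::] (x0_of F v0) n = rho0 n)
  <->
  Lambda owner E F (lam_seq owner E F J kstar).1 (x0_of F v0) rho0.
Proof.
set x0 := x0_of F v0; set lam := (lam_seq owner E F J kstar).1.
have start : is_history E F x0 [::] x0 by [].
split=> [[sigma [sigma_SPE out_rho0]]|rho0_Lambda].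
  by rewrite -(functional_extensionality _ _ out_rho0); exact: SPE_outcome_Lambda sigma_SPE start.
exists (follow_ref owner E F lam rho0).
split; last by move=> n; rewrite follow_ref_outcome0 // hrho0.2.
apply: (follow_ref_SPE hE) => // u reach_u.
  apply: (lam_star_fixpoint hkstar); apply/hJreach; exists u.1.
  by case: u reach_u.
have [h hist_u] := connect_is_history reach_u.
exists (outcome owner (limit_profile owner E F) h u).
exact: SPE_outcome_Lambda (limit_profile_SPE owner F hE x0) hist_u.
Qed.
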